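(* Let $G$ be a group and let $H, K \leq G$ be commensurable subgroups. Then there is a geodesic in $\mathcal{C}(G)$ from $H$ to $K$ whose vertices are $H$, $H\cap K$, and $K$. Hence the distance between $H$ and $K$ in $\mathcal{C}(G)$ is $c(H,K)$, and the edge $(H,K)$ is a geodesic.
   Context: For subgroups $A,B$ of $G$, $c(A,B) = [A:A\cap B][B:A\cap B]$; $A$ and $B$ are commensurable if $c(A,B)<\infty$. The commensurability graph $\mathcal{C}(G)$ is the weighted graph whose vertices are all subgroups of $G$, with an edge between $A$ and $B$ if and only if $A\cap B$ has finite index in both $A$ and $B$, this edge having weight $c(A,B)$. The length of a path is the product of its edge weights; $\mathcal{C}(G)$ is given the path metric, the distance between two vertices being the minimal length of a path joining them, and a geodesic is a path of minimal length between its endpoints. *)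

From Stdlib Require Import List Arith ClassicalEpsilon.
Import ListNotations.

Record group := Group {
  carrier :> Type;
  mul : carrier -> carrier -> carrier;
  one : carrier;
  inv : carrier -> carrier;
  mulA : forall x y z, mul x (mul y z) = mul (mul x y) z;
  mul1g : forall x, mul one x = x;
  mulVg : forall x, mul (inv x) x = one
}.

Arguments mul {g} _ _.
Arguments one {g}.
Arguments inv {g} _.

Section Defs.
Variable G : group.

Definition is_subgroup (A : G -> Prop) : Prop :=
  A one /\ (forall x y, A x -> A y -> A (mul x y)) /\ (forall x, A x -> A (inv x)).

Definition inter (A B : G -> Prop) : G -> Prop := fun x => A x /\ B x.

(* [A : B] = n : the left cosets a B (a in A) are exactly n in number,
   represented by f 0, ..., f (n-1); a B = a' B iff a^-1 a' in B. *)
Definition index_is (A B : G -> Prop) (n : nat) : Prop :=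
  exists f : nat -> G,
    (forall i, i < n -> A (f i)) /\
    (forall i j, i < n -> j < n -> B (mul (inv (f i)) (f j)) -> i = j) /\
    (forall a, A a -> exists i, i < n /\ B (mul (inv (f i)) a)).

Definition finite_index (A B : G -> Prop) : Prop := exists n, index_is A B n.

(* The index as a natural number (meaningful only when finite; 0 otherwise). *)
Definition index (A B : G -> Prop) : nat :=
  match excluded_middle_informative (finite_index A B) with
  | left h => proj1_sig (constructive_indefinite_description _ h)
  | right _ => 0
  end.

Definition commensurable (A B : G -> Prop) : Prop :=
  finite_index A (inter A B) /\ finite_index B (inter A B).

Definition cc (A B : G -> Prop) : nat :=
  index A (inter A B) * index B (inter A B).

Fixpoint is_path_from (x : G -> Prop) (l : list (G -> Prop)) : Prop :=
  match l with
  | nil => True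
  | y :: l' => is_subgroup y /\ commensurable x y /\ is_path_from y l'
  end.

Definition is_path (x : G -> Prop) (l : list (G -> Prop)) : Prop :=
  is_subgroup x /\ is_path_from x l.

Fixpoint path_len (x : G -> Prop) (l : list (G -> Prop)) : nat :=
  match l with
  | nil => 1
  | y :: l' => cc x y * path_len y l'
  end.

Definition geodesic (x : G -> Prop) (l : list (G -> Prop)) : Prop :=
  is_path x l /\
  forall l', is_path x l' -> last l' x = last l x -> path_len x l <= path_len x l'.

Definition is_dist (A B : G -> Prop) (d : nat) : Prop :=
  (exists l, is_path A l /\ last l A = B /\ path_len A l = d) /\
  (forall l, is_path A l -> last l A = B -> d <= path_len A l).

End Defs.

Arguments is_subgroup {G} _.
Arguments inter {G} _ _ _.
Arguments index_is {G} _ _ _.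
Arguments finite_index {G} _ _.
Arguments index {G} _ _.
Arguments commensurable {G} _ _.
Arguments cc {G} _ _.
Arguments is_path_from {G} _ _.
Arguments is_path {G} _ _.
Arguments path_len {G} _ _.
Arguments geodesic {G} _ _.
Arguments is_dist {G} _ _ _.

From Stdlib Require Import List.
Import ListNotations.
From Stdlib Require Import Arith Lia Classical ClassicalEpsilon FunctionalExtensionality PropExtensionality.

(* The weight c(A, B) obeys the triangle inequality c(X, Z) <= c(X, Y) c(Y, Z):
   if X is covered by m1 cosets of X ∩ Y and Y by m2 cosets of Y ∩ Z, then X is
   covered by m1 m2 cosets of Z, so [X : X ∩ Z] <= [X : X ∩ Y][Y : Y ∩ Z], and
   symmetrically for [Z : X ∩ Z].  By induction every path from H to K has length
   at least c(H, K), which is the length of both H -- K and H -- H ∩ K -- K. *)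

Lemma injective_bounded_le n m (g : nat -> nat) :
  (forall i, i < n -> g i < m) ->
  (forall i j, i < n -> j < n -> g i = g j -> i = j) -> n <= m.
Proof.
  intros g_lt g_inj.
  rewrite <- (length_seq n 0), <- (length_seq m 0), <- (length_map g).
  apply NoDup_incl_length.
  - apply NoDup_map_NoDup_ForallPairs; [|apply seq_NoDup].
    intros i j hi hj; rewrite in_seq in hi, hj; apply g_inj; lia.
  - intros p hp; apply in_map_iff in hp as (i & <- & hi).
    rewrite in_seq in hi |- *; specialize (g_lt i); lia.
Qed.

Lemma relational_pigeonhole n m (R : nat -> nat -> Prop) :
  (forall k, k < n -> exists p, p < m /\ R k p) ->
  (forall k k' p, k < n -> k' < n -> R k p -> R k' p -> k = k') -> n <= m.
Proof.
  intros R_total R_inj.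
  set (g k := epsilon (inhabits 0) (fun p => p < m /\ R k p)).
  assert (g_spec : forall k, k < n -> g k < m /\ R k (g k))
    by (intros k hk; exact (epsilon_spec _ _ (R_total k hk))).
  apply (injective_bounded_le n m g).
  - intros k hk; apply g_spec, hk.
  - intros k k' hk hk' e; apply (R_inj k k' (g k)); try apply g_spec; auto.
    rewrite e; apply g_spec, hk'.
Qed.

Lemma bounded_has_last (P : nat -> Prop) N :
  P 0 -> (forall n, P n -> n <= N) -> exists n, P n /\ ~ P (S n).
Proof.
  intros P0 P_le; apply NNPP; intro no_last.
  assert (P_all : forall n, P n).
  { induction n as [|n IH]; [exact P0|].
    apply NNPP; intro nP; apply no_last; eauto. }
  specialize (P_le (S N) (P_all (S N))); lia.
Qed.

Lemma last_cons {T} (x y : T) l : last (y :: l) x = last l y.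
Proof.
  revert x y; induction l as [|z l IH]; intros x y; [reflexivity|].
  simpl in *; destruct l; auto.
Qed.

Section Commensurability.
Variable G : group.
Implicit Types (A B X Y Z : G -> Prop) (x y : G).

Lemma mulgV x : mul x (inv x) = one.
Proof.
  rewrite <- (mul1g G (mul x (inv x))), <- (mulVg G (inv x)) at 1.
  rewrite <- mulA, (mulA _ (inv x) x), mulVg, mul1g.
  apply mulVg.
Qed.

Lemma mulg1 x : mul x one = x.
Proof. rewrite <- (mulVg G x), mulA, mulgV, mul1g; reflexivity. Qed.

Lemma invg_unique x y : mul x y = one -> y = inv x.
Proof.
  intro e; rewrite <- (mul1g G y), <- (mulVg G x), <- mulA, e, mulg1; reflexivity.
Qed.

Lemma invgM x y : inv (mul x y) = mul (inv y) (inv x).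
Proof.
  symmetry; apply invg_unique.
  rewrite mulA, <- (mulA _ x y), mulgV, mulg1, mulgV; reflexivity.
Qed.

Lemma invgK x : inv (inv x) = x.
Proof. symmetry; apply invg_unique, mulVg. Qed.

Lemma invg1 : inv (@one G) = one.
Proof. rewrite <- (mul1g G (inv one)); apply mulgV. Qed.

Lemma invMg_mul_cancel (w x y : G) : mul (inv (mul w x)) (mul w y) = mul (inv x) y.
Proof. rewrite invgM, <- mulA, (mulA _ (inv w) w), mulVg, mul1g; reflexivity. Qed.

Lemma pred_ext A B : (forall x, A x <-> B x) -> A = B.
Proof.
  intro AB; apply functional_extensionality; intro x;
  apply propositional_extensionality, AB.
Qed.

Lemma interC A B : inter A B = inter B A.
Proof. apply pred_ext; unfold inter; tauto. Qed.

Lemma inter_idPl A B : (forall x, A x -> B x) -> inter A B = A.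
Proof. intro AB; apply pred_ext; unfold inter; firstorder. Qed.

Lemma inter_idPr A B : (forall x, B x -> A x) -> inter A B = B.
Proof. intro BA; apply pred_ext; unfold inter; firstorder. Qed.

Lemma inter_subgroup A B : is_subgroup A -> is_subgroup B -> is_subgroup (inter A B).
Proof. unfold is_subgroup, inter; firstorder. Qed.

Definition distinct_cosets B (e : nat -> G) n : Prop :=
  forall i j, i < n -> j < n -> B (mul (inv (e i)) (e j)) -> i = j.

Definition in_some_coset B (t : nat -> G) m a : Prop :=
  exists p, p < m /\ B (mul (inv (t p)) a).

Definition at_least_cosets A B n : Prop :=
  exists e, (forall i, i < n -> A (e i)) /\ distinct_cosets B e n.

Lemma index_is_at_least A B n : index_is A B n -> at_least_cosets A B n.
Proof. intros (f & Af & f_distinct & _); exists f; auto. Qed.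

Lemma distinct_cosets_le B e n t m : is_subgroup B ->
  distinct_cosets B e n -> (forall k, k < n -> in_some_coset B t m (e k)) -> n <= m.
Proof.
  intros (_ & B_mul & B_inv) e_distinct e_covered.
  apply (relational_pigeonhole n m (fun k p => B (mul (inv (t p)) (e k)))).
  - exact e_covered.
  - intros k k' p hk hk' Bk Bk'; apply e_distinct; auto.
    rewrite <- (invMg_mul_cancel (inv (t p))); auto.
Qed.

Lemma at_least_cosets_le A B n m : is_subgroup B ->
  index_is A B m -> at_least_cosets A B n -> n <= m.
Proof.
  intros B_sub (f & _ & _ & f_covers) (e & Ae & e_distinct).
  apply (distinct_cosets_le B e n f m); auto.
  intros k hk; apply f_covers, Ae, hk.
Qed.

Lemma index_is_index A B n : is_subgroup B -> index_is A B n -> index A B = n.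
Proof.
  intros B_sub A_B_n; unfold index.
  destruct (excluded_middle_informative (finite_index A B)) as [fin | nfin].
  - destruct (constructive_indefinite_description _ fin) as [n' A_B_n']; simpl.
    apply Nat.le_antisymm; eapply at_least_cosets_le; eauto using index_is_at_least.
  - exfalso; apply nfin; exists n; exact A_B_n.
Qed.

Lemma index_isP A B : is_subgroup B -> finite_index A B -> index_is A B (index A B).
Proof. intros B_sub [n A_B_n]; rewrite (index_is_index A B n); auto. Qed.

Lemma distinct_cosets_extend A B e n a : is_subgroup B ->
  distinct_cosets B e n -> ~ in_some_coset B e n a ->
  distinct_cosets B (fun i => if i =? n then a else e i) (S n).
Proof.
  intros (_ & _ & B_inv) e_distinct a_new i j hi hj Bij.
  destruct (Nat.eqb_spec i n), (Nat.eqb_spec j n); try lia.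
  - exfalso; apply a_new; exists j; split; [lia|].
    rewrite <- (invgK (mul (inv (e j)) a)), invgM, invgK; auto.
  - exfalso; apply a_new; exists i; split; [lia | exact Bij].
  - apply e_distinct; auto; lia.
Qed.

Lemma finite_index_bounded A B N : is_subgroup B ->
  (forall n, at_least_cosets A B n -> n <= N) -> finite_index A B.
Proof.
  intros B_sub bounded.
  destruct (bounded_has_last (at_least_cosets A B) N) as
    (n & (e & Ae & e_distinct) & no_more); auto.
  { exists (fun _ => one); split; [intros i hi | intros i j hi]; lia. }
  exists n, e; repeat split; auto.
  intros a Aa; apply NNPP; intro a_new; apply no_more.
  exists (fun i => if i =? n then a else e i); split.
  - intros i hi; destruct (Nat.eqb_spec i n); auto; apply Ae; lia.
  - apply distinct_cosets_extend; auto.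
Qed.

Lemma index_is_self A : is_subgroup A -> index_is A A 1.
Proof.
  intros (A1 & _ & _); exists (fun _ => one); repeat split; auto; [lia|].
  intros a Aa; exists 0; rewrite invg1, mul1g; auto.
Qed.

Lemma cosets_cover_trans X Y Z f m1 g m2 a :
  (forall x, X x -> in_some_coset (inter X Y) f m1 x) ->
  (forall y, Y y -> in_some_coset (inter Y Z) g m2 y) -> X a ->
  in_some_coset Z (fun p => mul (f (p / m2)) (g (p mod m2))) (m1 * m2) a.
Proof.
  intros f_covers g_covers Xa.
  destruct (f_covers a Xa) as (i & hi & _ & Y_fa).
  destruct (g_covers _ Y_fa) as (j & hj & _ & Z_gfa).
  exists (i * m2 + j); split; [nia|].
  assert (quo : (i * m2 + j) / m2 = i) by (symmetry; apply Nat.div_unique with j; lia).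
  assert (rem : (i * m2 + j) mod m2 = j) by (symmetry; apply Nat.mod_unique with i; lia).
  rewrite quo, rem.
  rewrite invgM, <- mulA; exact Z_gfa.
Qed.

Lemma distinct_cosets_inter A B e n : is_subgroup A ->
  (forall i, i < n -> A (e i)) -> distinct_cosets (inter A B) e n ->
  distinct_cosets B e n.
Proof.
  intros (_ & A_mul & A_inv) Ae e_distinct i j hi hj Bij.
  apply e_distinct; repeat split; auto.
Qed.

Lemma index_inter_le X Y Z :
  is_subgroup X -> is_subgroup Y -> is_subgroup Z ->
  finite_index X (inter X Y) -> finite_index Y (inter Y Z) ->
  finite_index X (inter X Z) /\
  index X (inter X Z) <= index X (inter X Y) * index Y (inter Y Z).
Proof.
  intros X_sub Y_sub Z_sub XY_fin YZ_fin.
  destruct (index_isP _ _ (inter_subgroup _ _ X_sub Y_sub) XY_fin)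
    as (f & _ & _ & f_covers).
  destruct (index_isP _ _ (inter_subgroup _ _ Y_sub Z_sub) YZ_fin)
    as (g & _ & _ & g_covers).
  set (m1 := index X (inter X Y)) in *.
  set (m2 := index Y (inter Y Z)) in *.
  assert (bound : forall n, at_least_cosets X (inter X Z) n -> n <= m1 * m2).
  { intros n (e & Xe & e_distinct).
    apply (distinct_cosets_le Z e n (fun p => mul (f (p / m2)) (g (p mod m2))) _ Z_sub).
    - exact (distinct_cosets_inter X Z e n X_sub Xe e_distinct).
    - intros k hk; apply (cosets_cover_trans X Y Z); auto. }
  assert (XZ_fin : finite_index X (inter X Z))
    by exact (finite_index_bounded _ _ _ (inter_subgroup _ _ X_sub Z_sub) bound).
  split; [exact XZ_fin|].
  apply bound, index_is_at_least, index_isP; auto using inter_subgroup.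
Qed.

Lemma commensurable_trans X Y Z :
  is_subgroup X -> is_subgroup Y -> is_subgroup Z ->
  commensurable X Y -> commensurable Y Z ->
  commensurable X Z /\ cc X Z <= cc X Y * cc Y Z.
Proof.
  intros X_sub Y_sub Z_sub [XY_fin YX_fin] [YZ_fin ZY_fin].
  destruct (index_inter_le X Y Z X_sub Y_sub Z_sub XY_fin YZ_fin) as [XZ_fin XZ_le].
  rewrite (interC X Y) in YX_fin; rewrite (interC Y Z) in ZY_fin.
  destruct (index_inter_le Z Y X Z_sub Y_sub X_sub ZY_fin YX_fin) as [ZX_fin ZX_le].
  rewrite (interC Z X), (interC Z Y), (interC Y X) in *.
  split; [split; auto|].
  unfold cc; nia.
Qed.

Lemma index_self A : is_subgroup A -> index A A = 1.
Proof. intro A_sub; apply index_is_index, index_is_self; auto. Qed.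

Lemma commensurable_sub A B : is_subgroup B -> (forall x, B x -> A x) ->
  finite_index A B -> commensurable A B /\ cc A B = index A B.
Proof.
  intros B_sub BA AB_fin; unfold commensurable, cc.
  rewrite (inter_idPr A B BA), index_self by auto.
  split; [split; [auto | exists 1; apply index_is_self; auto] | lia].
Qed.

Lemma commensurable_sup A B : is_subgroup A -> (forall x, A x -> B x) ->
  finite_index B A -> commensurable A B /\ cc A B = index B A.
Proof.
  intros A_sub AB BA_fin; unfold commensurable, cc.
  rewrite (inter_idPl A B AB), index_self by auto.
  split; [split; [exists 1; apply index_is_self; auto | auto] | lia].
Qed.

Lemma commensurable_refl A : is_subgroup A -> commensurable A A /\ cc A A = 1.
Proof.
  intro A_sub; rewrite <- (index_self A A_sub).
  apply commensurable_sub; auto; exists 1; apply index_is_self; auto.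
Qed.

Lemma path_last_subgroup A l :
  is_subgroup A -> is_path_from A l -> is_subgroup (last l A).
Proof.
  revert A; induction l as [|B l IH]; intros A A_sub path; [exact A_sub|].
  destruct path as (B_sub & _ & path); rewrite last_cons; auto.
Qed.

Lemma path_len_ge_cc A l : is_subgroup A -> is_path_from A l ->
  commensurable A (last l A) /\ cc A (last l A) <= path_len A l.
Proof.
  revert A; induction l as [|B l IH]; intros A A_sub path.
  - destruct (commensurable_refl A A_sub) as [AA AA1]; simpl; split; [exact AA | lia].
  - destruct path as (B_sub & AB & path); simpl path_len; rewrite last_cons.
    destruct (IH B B_sub path) as [B_last B_last_le].
    destruct (commensurable_trans A B (last l B) A_sub B_sub
                (path_last_subgroup B l B_sub path) AB B_last) as [A_last A_last_le].
    split; [exact A_last|].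
    eapply Nat.le_trans; [exact A_last_le | apply Nat.mul_le_mono_l; exact B_last_le].
Qed.

End Commensurability.

Theorem lemma6 (G : group) (H K : G -> Prop) :
  is_subgroup H -> is_subgroup K -> commensurable H K ->
  geodesic H [inter H K; K] /\
  is_dist H K (cc H K) /\
  geodesic H [K].
Proof.
  intros H_sub K_sub HK.
  pose proof (inter_subgroup G H K H_sub K_sub) as HK_sub.
  destruct HK as [H_HK_fin K_HK_fin].
  destruct (commensurable_sub G H (inter H K) HK_sub (fun x => @proj1 _ _) H_HK_fin)
    as [H_HK H_HK_cc].
  destruct (commensurable_sup G (inter H K) K HK_sub (fun x => @proj2 _ _) K_HK_fin)
    as [HK_K HK_K_cc].
  assert (lower_bound : forall l, is_path H l -> last l H = K -> cc H K <= path_len H l).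
  { intros l [_ path] <-; apply path_len_ge_cc; auto. }
  assert (via_inter : is_path H [inter H K; K] /\ path_len H [inter H K; K] = cc H K).
  { split; [exact (conj H_sub (conj HK_sub (conj H_HK (conj K_sub (conj HK_K I))))) |].
    cbn [path_len]; rewrite H_HK_cc, HK_K_cc; unfold cc; lia. }
  assert (direct : is_path H [K] /\ path_len H [K] = cc H K).
  { split; [exact (conj H_sub (conj K_sub (conj (conj H_HK_fin K_HK_fin) I))) |].
    cbn [path_len]; lia. }
  destruct via_inter as [via_path via_len]; destruct direct as [direct_path direct_len].
  split; [|split; [split|]].
  - split; [exact via_path|].
    intros l path e; rewrite via_len; apply lower_bound; auto.
  - exists [K]; auto.
  - exact lower_bound.
  - split; [exact direct_path|].
    intros l path e; rewrite direct_len; apply lower_bound; auto.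
Qed.
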